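(* Let $G$ be a DCG containing a cycle $C=(v_1,\dots,v_k)$ of distinct vertices, $k\ge2$, let $H=\textsc{Reverse}(G,C)$, and let $\overline{C}=(v_k,v_{k-1},\dots,v_1)$ be the reversed cycle, which is a cycle of $H$. Then: (1) every vertex has the same set of descendants in $G$ as in $H$; (2) $G=\textsc{Reverse}(H,\overline{C})$.
   Context: A DCG is a directed graph without self-loops. A vertex $x$ is a descendant of $v$ if there is a directed path from $v$ to $x$. $\mathrm{Pa}_G(v)$ is the set of $u$ with $u\to v$ in $G$. For a cycle $C=(v_1,\dots,v_k)$ (edges $v_i\to v_{i+1}$, indices mod $k$), $\textsc{Reverse}(G,C)$ is the DCG on the same vertex set with edge set $$\{v_{i+1}\to v_i\}_{i=1}^k\ \cup\ \{a\to b\in E(G): b\notin C\}\ \cup\ \{w\to v_{i-1} : 1\le i\le k,\ w\in \mathrm{Pa}_G(v_i)\setminus\{v_{i-1}\}\}$$ (indices mod $k$); here, for a cycle listed as $(u_1,\dots,u_k)$, the role of $v_{i-1}$ is played by the predecessor of the vertex along that cycle. *)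

From mathcomp Require Import all_boot.
Set Implicit Arguments. Unset Strict Implicit. Unset Printing Implicit Defensive.

Definition dcg (V : finType) (G : rel V) : Prop := forall v, ~~ G v v.

(* C = [:: v_1; ...; v_k] is a cycle of G of distinct vertices, k >= 2:
   edges v_i -> v_(i+1), indices mod k (path.v's [cycle]). *)
Definition is_cycle (V : finType) (G : rel V) (C : seq V) : Prop :=
  [/\ cycle G C, uniq C & 1 < size C].

Definition descendants (V : finType) (G : rel V) (v : V) : {set V} :=
  [set x | connect G v x].

(* The three
   disjuncts are the three parts of the edge set in the paper:
   - v_(i+1) -> v_i,
   - a -> b in G with b not in C,
   - w -> v_(i-1) for w in Pa_G(v_i) \ {v_(i-1)}. *)
Definition Reverse (V : finType) (G : rel V) (C : seq V) : rel V :=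
  fun a b =>
    [|| (a \in C) && (b == prev C a),
        G a b && (b \notin C)
      | [exists u, [&& u \in C, G a u, a != prev C u & b == prev C u]]].

From mathcomp Require Import all_boot.

(* Reversing C only redirects edges into C: the edges of Reverse G C ending
   at a vertex b of C are those a -> b with a = next C b, or with
   a -> next C b in G.  Since C and its reversal are strongly connected in
   both graphs, every edge of either graph is a path in the other, and the
   same description applied to the reversed cycle (where next becomes prev)
   recovers the edges of G. *)

Lemma cycle_connect (V : finType) (e : rel V) (p : seq V) x y :
  cycle e p -> x \in p -> y \in p -> connect e x y.
Proof.
move=> cp xp yp; case: (rot_to xp) => i q eq_rot.
have cyc : cycle e (x :: q) by rewrite -eq_rot rot_cycle.
have : y \in x :: q by rewrite -eq_rot mem_rot.
rewrite !inE => /orP [/eqP -> //|yq].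
by apply: (path_connect cyc); rewrite inE mem_rcons inE yq !orbT.
Qed.

Section ReverseCycle.

Variables (V : finType) (G : rel V) (C : seq V).

Lemma Reverse_notin a b : b \notin C -> Reverse G C a b = G a b.
Proof.
move=> bNC; rewrite /Reverse bNC andbT.
have -> : (a \in C) && (b == prev C a) = false.
  by apply/negbTE/andP => [[aC /eqP eb]]; rewrite eb mem_prev aC in bNC.
have -> : [exists u, [&& u \in C, G a u, a != prev C u & b == prev C u]] = false.
  apply/negbTE/existsP => [[u /and4P [uC _ _ /eqP eb]]].
  by rewrite eb mem_prev uC in bNC.
by rewrite orbF.
Qed.

Hypothesis uniqC : uniq C.

Lemma Reverse_in a b : b \in C ->
  Reverse G C a b = (a == next C b) || G a (next C b) && (a != b).
Proof.
move=> bC; rewrite /Reverse bC andbF /=; congr (_ || _).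
  apply/andP/eqP => [[aC /eqP ->]|->]; first by rewrite next_prev.
  by rewrite mem_next bC prev_next.
apply/existsP/andP => [[u /and4P [uC Gau aNu /eqP eb]]|[Ganb aNb]].
  by rewrite eb next_prev.
by exists (next C b); rewrite mem_next bC Ganb prev_next // aNb eqxx.
Qed.

Lemma Reverse_rev_cycle : cycle (Reverse G C) (rev C).
Proof.
rewrite rev_cycle.
apply: (@sub_in_cycle _ (mem C) (frel (next C))); last exact: cycle_next.
  by move=> x y xC _ /= /eqP <-; rewrite Reverse_in // eqxx.
exact/allP.
Qed.

Hypothesis cycleC : cycle G C.

Lemma Reverse_sub_connect : subrel (Reverse G C) (connect G).
Proof.
move=> a b; case: (boolP (b \in C)) => [bC|bNC]; last first.
  by rewrite Reverse_notin // => /connect1.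
have nbC : next C b \in C by rewrite mem_next.
rewrite Reverse_in // => /orP [/eqP ->|/andP [Ganb _]].
  exact: cycle_connect cycleC nbC bC.
apply: connect_trans (connect1 Ganb) _.
exact: cycle_connect cycleC nbC bC.
Qed.

Lemma sub_connect_Reverse : subrel G (connect (Reverse G C)).
Proof.
move=> a b Gab; case: (boolP (b \in C)) => [bC|bNC]; last first.
  by apply: connect1; rewrite Reverse_notin.
have pbC : prev C b \in C by rewrite mem_prev.
have pb_b : connect (Reverse G C) (prev C b) b.
  by apply: cycle_connect Reverse_rev_cycle _ _; rewrite mem_rev.
case: (eqVneq a (prev C b)) => [-> //|aNpb].
apply: connect_trans pb_b; apply: connect1.
by rewrite Reverse_in // next_prev // Gab aNpb orbT.
Qed.

Lemma connect_Reverse : connect (Reverse G C) =2 connect G.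
Proof.
move=> x y; apply/idP/idP.
- exact: connect_sub Reverse_sub_connect x y.
- exact: connect_sub sub_connect_Reverse x y.
Qed.

End ReverseCycle.

Lemma Reverse_revK (V : finType) (G : rel V) (C : seq V) :
  dcg G -> uniq C -> cycle G C -> Reverse (Reverse G C) (rev C) =2 G.
Proof.
move=> loopless uniqC cycleC a b; case: (boolP (b \in C)) => [bC|bNC]; last first.
  by rewrite Reverse_notin ?mem_rev // Reverse_notin.
have pbC : prev C b \in C by rewrite mem_prev.
rewrite Reverse_in ?rev_uniq ?mem_rev // next_rev // Reverse_in // next_prev //.
case: (eqVneq a (prev C b)) => [->|aNpb] /=; first by rewrite prev_cycle.
case: (eqVneq a b) => [->|_] /=; last by rewrite !andbT.
by rewrite (negbTE (loopless b)).
Qed.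

Theorem mainTheorem12 (V : finType) (G : rel V) (C : seq V) :
  dcg G -> is_cycle G C ->
  let H := Reverse G C in
  is_cycle H (rev C) /\
  (forall v : V, descendants G v = descendants H v) /\
  (forall a b : V, G a b = Reverse H (rev C) a b).
Proof.
move=> loopless [cycleC uniqC sizeC] H; split; [|split].
- by split; rewrite ?rev_uniq ?size_rev //; apply: Reverse_rev_cycle.
- by move=> v; apply/setP => x; rewrite !inE connect_Reverse.
- by move=> a b; rewrite Reverse_revK.
Qed.
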